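(* The space $X_\Delta=\mathbb C^d_\Delta/\!/N_{\mathbb C}$ is compact, i.e. every open covering of $X_\Delta$ admits a finite subcovering.
   Context: Let $\mathfrak d$ be an $n$-dimensional real vector space, $\mathfrak d_{\mathbb C}=\mathfrak d\oplus i\mathfrak d$. A quasilattice in $\mathfrak d$ is the $\mathbb Z$-submodule generated by a finite set of vectors spanning $\mathfrak d$. Let $\Delta\subset\mathfrak d^*$ be an $n$-dimensional convex polytope (not necessarily rational or simple) with $d$ facets, $\Delta=\bigcap_{j=1}^d\{\mu:\langle\mu,X_j\rangle\ge\lambda_j\}$, with chosen inward normals $X_1,\dots,X_d\in\mathfrak d$, and $Q$ a quasilattice containing them. For each face $F$, $I_F=\{j:\langle\mu,X_j\rangle=\lambda_j\text{ on }F\}$; $\mathbb C^d_\Delta=\bigcup_F\{z\in\mathbb C^d:z_j\ne0\ \forall j\notin I_F\}$ (all faces). $\pi:\mathbb R^d\to\mathfrak d$, $\pi_{\mathbb C}$, $e_j\mapsto X_j$; $\mathfrak n=\ker\pi$. $T^d_{\mathbb C}=\mathbb C^d/\mathbb Z^d$ acts on $\mathbb C^d$ by $\exp(Z)\cdot z=(e^{2\pi iZ_j}z_j)_j$; $T^d=\mathbb R^d/\mathbb Z^d$; $N=\ker(T^d\to\mathfrak d/Q)$, $N_{\mathbb C}=\ker(T^d_{\mathbb C}\to\mathfrak d_{\mathbb C}/Q)$, $A=\exp(i\mathfrak n)$. $X_\Delta$ is the quotient of $\mathbb C^d_\Delta$ by the equivalence relation $z\sim w\iff N\,\overline{Az}\cap\overline{Aw}\ne\emptyset$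 (closures in $\mathbb C^d_\Delta$), with the quotient topology (not necessarily Hausdorff). *)

From Stdlib Require Import Reals List Relations ZArith.
From mathcomp Require Import ssreflect ssrfun ssrbool eqtype ssrnat seq fintype bigop.
Set Implicit Arguments. Unset Strict Implicit.

Open Scope R_scope.

(* vectors of R^k (also used for d^* = R^n via the standard pairing) *)
Definition rsum (k : nat) (f : 'I_k -> R) : R := \big[Rplus/0]_(i < k) f i.
Definition dot (k : nat) (u v : 'I_k -> R) : R := rsum (fun i => u i * v i).

Section Poly.
Variables (n d : nat) (X : 'I_d -> 'I_n -> R) (lam : 'I_d -> R).

Definition Delta (mu : 'I_n -> R) : Prop := forall j, dot mu (X j) >= lam j.

(* (nonempty) faces: F = Delta cap {<mu,v> = c} for a supporting hyperplane
   (v = 0, c = 0 gives Delta itself) *)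
Definition is_face (F : ('I_n -> R) -> Prop) : Prop :=
  (exists mu, F mu) /\
  exists (v : 'I_n -> R) (c : R),
    (forall mu, Delta mu -> dot mu v >= c) /\
    (forall mu, F mu <-> (Delta mu /\ dot mu v = c)).

Definition aff_indep (k : nat) (p : 'I_k.+1 -> 'I_n -> R) : Prop :=
  forall c : 'I_k -> R,
    (forall i, rsum (fun l => c l * (p (lift ord0 l) i - p ord0 i)) = 0) ->
    forall l, c l = 0.

Definition dim_ge (S : ('I_n -> R) -> Prop) (k : nat) : Prop :=
  exists p : 'I_k.+1 -> 'I_n -> R, aff_indep p /\ forall i, S (p i).

Definition is_facet (F : ('I_n -> R) -> Prop) : Prop :=
  is_face F /\ (exists mu, Delta mu /\ ~ F mu) /\ dim_ge F n.-1.

Definition Fj (j : 'I_d) (mu : 'I_n -> R) : Prop := Delta mu /\ dot mu (X j) = lam j.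

Definition polytope_data : Prop :=
  (exists M, forall mu, Delta mu -> forall i, Rabs (mu i) <= M) /\
  dim_ge Delta n /\
  (forall j, is_facet (Fj j)) /\
  (forall G, is_facet G -> exists j, forall mu, G mu <-> Fj j mu) /\
  (forall j k, (forall mu, Fj j mu <-> Fj k mu) -> j = k).

Definition IF (F : ('I_n -> R) -> Prop) (j : 'I_d) : Prop :=
  forall mu, F mu -> dot mu (X j) = lam j.

Definition Cpt := 'I_d -> (R * R).   (* z_j = fst (z j) + i snd (z j) *)

Definition cmul (a b : R * R) : R * R :=
  (fst a * fst b - snd a * snd b, fst a * snd b + snd a * fst b).

(* exp(Z) . z for Z = a + i b :  z_j |-> e^{2 pi i Z_j} z_j *)
Definition expact (a b : 'I_d -> R) (z : Cpt) : Cpt :=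
  fun j => cmul (exp (-(2 * PI * b j)) * cos (2 * PI * a j),
                 exp (-(2 * PI * b j)) * sin (2 * PI * a j)) (z j).

Definition zeroR : 'I_d -> R := fun _ => 0.

Definition CdDelta (z : Cpt) : Prop :=
  exists F, is_face F /\ forall j, ~ IF F j -> z j <> (0, 0).

Definition piR (a : 'I_d -> R) : 'I_n -> R := fun i => rsum (fun j => a j * X j i).

(* sup-distance on C^d (induces the standard topology) *)
Definition near (eps : R) (z w : Cpt) : Prop :=
  forall j, Rabs (fst (z j) - fst (w j)) < eps /\ Rabs (snd (z j) - snd (w j)) < eps.

Definition closureD (S : Cpt -> Prop) (p : Cpt) : Prop :=
  CdDelta p /\ forall eps, eps > 0 -> exists s, S s /\ near eps p s.

Section Quasi.
Variables (m : nat) (Y : 'I_m -> 'I_n -> R).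

Definition inQ (v : 'I_n -> R) : Prop :=
  exists k : 'I_m -> Z, forall i, v i = rsum (fun l => IZR (k l) * Y l i).

Definition quasilattice_data : Prop :=
  (forall v : 'I_n -> R, exists c : 'I_m -> R,
      forall i, v i = rsum (fun l => c l * Y l i)) /\
  (forall j, inQ (X j)).

(* A z, with A = exp(i n), n = ker pi *)
Definition orbitA (z w : Cpt) : Prop :=
  exists b : 'I_d -> R, (forall i, piR b i = 0) /\ forall j, w j = expact zeroR b z j.

(* z ~ w  iff  N . cl(Az) meets cl(Aw);  N = { [a] in T^d : pi(a) in Q } *)
Definition simrel (z w : Cpt) : Prop :=
  exists a : 'I_d -> R, inQ (piR a) /\
  exists p, closureD (orbitA z) p /\ closureD (orbitA w) (expact a zeroR p).

Definition simeq : Cpt -> Cpt -> Prop := clos_refl_sym_trans Cpt simrel.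

(* subsets of X_Delta  <->  ~-saturated subsets of C^d_Delta (via preimage);
   open in the quotient topology  <->  preimage open in C^d_Delta *)
Definition saturated (U : Cpt -> Prop) : Prop :=
  forall z w, CdDelta z -> CdDelta w -> simeq z w -> U z -> U w.

Definition openD (U : Cpt -> Prop) : Prop :=
  forall z, CdDelta z -> U z ->
    exists eps, eps > 0 /\ forall w, CdDelta w -> near eps z w -> U w.

Definition XDelta_compact : Prop :=
  forall (I : Type) (U : I -> Cpt -> Prop),
    (forall i, openD (U i) /\ saturated (U i)) ->
    (forall z, CdDelta z -> exists i, U i z) ->
    exists l : list I, forall z, CdDelta z -> exists i, In i l /\ U i z.

End Quasi.
End Poly.

From Pilot Require Import Defs.
From Stdlib Require Import Reals.
From mathcomp Require Import ssreflect ssrnat fintype.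
From Stdlib Require Import Lra List Classical ClassicalEpsilon FunctionalExtensionality Relations.
From HB Require Import structures.
From mathcomp Require Import ssrfun ssrbool eqtype seq bigop finset.

(* The quotient X_Delta is compact as soon as some compact subset of C^d_Delta
   meets every ~-class.  We show that the finitely many "normal regions"
     K_S = { w : |w_j| <= 1 for all j,  |w_j| >= 1 for j notin S },
   with S contained in I_F for a face F, do: they are closed and bounded, hence
   compact (Heine-Borel, proved by bisection), and contained in C^d_Delta; and
   every z in C^d_Delta has a point of K_S in its orbit under A = exp(i n).  The
   latter comes from linear programming: minimizing a linear form built from
   log |z_j| over a face of Delta (extreme value theorem), the optimality
   multipliers (Farkas' lemma, proved by Fourier-Motzkin elimination) give the
   element of ker pi moving z into K_S. *)

Set Implicit Arguments. Unset Strict Implicit.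
Open Scope R_scope.

Lemma Rplus_associative : associative Rplus.
Proof. by move=> x y z; rewrite Rplus_assoc. Qed.

HB.instance Definition _ :=
  Monoid.isComLaw.Build R 0 Rplus Rplus_associative Rplus_comm Rplus_0_l.

Section FiniteSums.
Variable k : nat.
Implicit Types f g : 'I_k -> R.

Lemma rsum_ext f g : (forall j, f j = g j) -> rsum f = rsum g.
Proof. by move=> H; apply: eq_bigr => j _. Qed.

Lemma rsum_add f g : rsum (fun j => f j + g j) = rsum f + rsum g.
Proof. exact: big_split. Qed.

Lemma rsum_scal c f : rsum (fun j => c * f j) = c * rsum f.
Proof.
by rewrite /rsum (big_morph (Rmult c) (Rmult_plus_distr_l c) (Rmult_0_r c)).
Qed.

Lemma rsum_eq0 f : (forall j, f j = 0) -> rsum f = 0.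
Proof. by move=> H; apply: big1 => j _. Qed.

Lemma rsum_le f g : (forall j, f j <= g j) -> rsum f <= rsum g.
Proof.
move=> H; apply: (big_ind2 (fun x y => x <= y)); [lra | | by move=> j _].
by move=> ? ? ? ? ? ?; apply: Rplus_le_compat.
Qed.

Lemma rsum_ge0 f : (forall j, 0 <= f j) -> 0 <= rsum f.
Proof. by move=> H; rewrite -(rsum_eq0 (f := fun _ => 0)) //; apply: rsum_le. Qed.

Lemma rsum_delta (j0 : 'I_k) f : rsum (fun j => if j == j0 then f j else 0) = f j0.
Proof.
rewrite /rsum (bigD1 j0) //= eqxx big1 /=; first lra.
by move=> i /negbTE ->.
Qed.

Lemma rsum_term_le f (j0 : 'I_k) : (forall j, 0 <= f j) -> f j0 <= rsum f.
Proof.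
move=> H; rewrite -(rsum_delta j0 f); apply: rsum_le => j.
by case: (j == j0); [lra | exact: H].
Qed.

End FiniteSums.

Lemma rsum_swap a b (f : 'I_a -> 'I_b -> R) :
  rsum (fun i => rsum (fun j => f i j)) = rsum (fun j => rsum (fun i => f i j)).
Proof. exact: exchange_big. Qed.

Section DotProduct.
Variable n : nat.
Implicit Types u v w h : 'I_n -> R.

Lemma dot_lin u h v (e : R) : dot (fun i => u i + e * h i) v = dot u v + e * dot h v.
Proof. by rewrite /dot -rsum_scal -rsum_add; apply: rsum_ext => i; ring. Qed.

Lemma dot_opp u v : dot u (fun i => - v i) = - dot u v.
Proof.
rewrite /dot (rsum_ext (g := fun i => -1 * (u i * v i))) ?rsum_scal;
  [ring | move=> i; ring].
Qed.

Lemma dot_comb d (Xs : 'I_d -> 'I_n -> R) (c : 'I_d -> R) u :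
  dot u (fun i => rsum (fun j => c j * Xs j i)) = rsum (fun j => c j * dot u (Xs j)).
Proof.
rewrite /dot (rsum_ext (g := fun i => rsum (fun j => c j * (u i * Xs j i)))).
  by rewrite rsum_swap; apply: rsum_ext => j; rewrite rsum_scal.
by move=> i; rewrite -rsum_scal; apply: rsum_ext => j; ring.
Qed.

Lemma dot_diff_bound u w v (e : R) :
  (forall i, Rabs (u i - w i) < e) ->
  dot u v - dot w v <= e * rsum (fun i => Rabs (v i)).
Proof.
move=> H; rewrite /dot -rsum_scal.
have -> : rsum (fun i => u i * v i) - rsum (fun i => w i * v i) =
          rsum (fun i => (u i - w i) * v i).
  by rewrite (rsum_ext (f := fun i => u i * v i)
        (g := fun i => (u i - w i) * v i + w i * v i)) ?rsum_add; [ring | move=> i; ring].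
apply: rsum_le => i; apply: Rle_trans (Rle_abs _) _; rewrite Rabs_mult.
by apply: Rmult_le_compat_r; [exact: Rabs_pos | left].
Qed.

End DotProduct.

(* An inequality  sum_(i < n) a_i h_i >= c  in unknowns h : nat -> R. *)
Definition ineq := ((nat -> R) * R)%type.
Definition ineq_add (r1 r2 : ineq) : ineq := (fun i => fst r1 i + fst r2 i, snd r1 + snd r2).
Definition ineq_scale (c : R) (r : ineq) : ineq := (fun i => c * fst r i, c * snd r).
Definition lhs n (r : ineq) (h : nat -> R) : R := rsum (fun i : 'I_n => fst r i * h i).

Definition feasible n (rows : list ineq) : Prop :=
  exists h, forall r, In r rows -> lhs n r h >= snd r.

Inductive cone (rows : list ineq) : ineq -> Prop :=
| cone_in r : In r rows -> cone rows r
| cone_add r1 r2 : cone rows r1 -> cone rows r2 -> cone rows (ineq_add r1 r2)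
| cone_scale c r : 0 <= c -> cone rows r -> cone rows (ineq_scale c r).

Lemma cone_trans rows1 rows2 :
  (forall r, In r rows2 -> cone rows1 r) -> forall r, cone rows2 r -> cone rows1 r.
Proof. by move=> H r; elim=> *; [exact: H | exact: cone_add | exact: cone_scale]. Qed.

Lemma lhsS n r h : lhs n.+1 r h = lhs n r h + fst r n * h n.
Proof. by rewrite /lhs /rsum big_ord_recr. Qed.

Lemma lhs_upd n r h x :
  lhs n r (fun i => if (i == n)%N then x else h i) = lhs n r h.
Proof. by apply: rsum_ext => i; rewrite (ltn_eqF (ltn_ord i)). Qed.

Lemma separate_lists (A B : list R) :
  (forall a b, In a A -> In b B -> a <= b) ->
  exists x, (forall a, In a A -> a <= x) /\ (forall b, In b B -> x <= b).
Proof.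
elim: A => [|a A IH] H.
- elim: B {H} => [|b B [x [_ Hx]]]; first by exists 0; split=> ? [].
  exists (Rmin x b); split=> [? []|b' [<-|Hb']]; first exact: Rmin_r.
  exact: Rle_trans (Rmin_l _ _) (Hx _ Hb').
- have [x [Hx1 Hx2]] : exists x, (forall a, In a A -> a <= x) /\ (forall b, In b B -> x <= b).
    by apply: IH => a' b' Ha Hb; apply: H => //; right.
  exists (Rmax x a); split.
  + by move=> a' [<-|Ha]; [exact: Rmax_r | exact: Rle_trans (Hx1 _ Ha) (Rmax_l _ _)].
  + by move=> b Hb; apply: Rmax_lub; [exact: Hx2 | apply: H => //; left].
Qed.

Definition is_pos (x : R) : bool := if Rlt_dec 0 x then true else false.
Definition is_neg (x : R) : bool := if Rlt_dec x 0 then true else false.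
Definition is_zero (x : R) : bool := if Req_EM_T x 0 then true else false.

Lemma is_posP x : is_pos x = true <-> 0 < x.
Proof. by rewrite /is_pos; case: Rlt_dec. Qed.
Lemma is_negP x : is_neg x = true <-> x < 0.
Proof. by rewrite /is_neg; case: Rlt_dec. Qed.
Lemma is_zeroP x : is_zero x = true <-> x = 0.
Proof. by rewrite /is_zero; case: Req_EM_T. Qed.

Definition cancel_last n (p q : ineq) : ineq :=
  ineq_add (ineq_scale (- fst q n) p) (ineq_scale (fst p n) q).

(* One Fourier-Motzkin step: the system in h_0..h_(n-1) obtained by eliminating h_n. *)
Definition eliminate n (rows : list ineq) : list ineq :=
  filter (fun r => is_zero (fst r n)) rows ++
  flat_map (fun p => map (cancel_last n p) (filter (fun r => is_neg (fst r n)) rows))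
           (filter (fun r => is_pos (fst r n)) rows).

Lemma in_eliminate n rows r : In r (eliminate n rows) ->
  (In r rows /\ fst r n = 0) \/
  exists p q, [/\ In p rows, In q rows, 0 < fst p n, fst q n < 0 & r = cancel_last n p q].
Proof.
rewrite /eliminate in_app_iff filter_In is_zeroP => -[H|]; first by left.
move/in_flat_map => [p [/filter_In [Hp /is_posP Hp']]].
move/in_map_iff => [q [<- /filter_In [Hq /is_negP Hq']]].
by right; exists p, q.
Qed.

Lemma cancel_last_in n rows p q :
  In p rows -> In q rows -> 0 < fst p n -> fst q n < 0 -> In (cancel_last n p q) (eliminate n rows).
Proof.
move=> Hp Hq Hpn Hqn; rewrite /eliminate in_app_iff; right; apply/in_flat_map.
exists p; split; first by apply/filter_In; split=> //; apply/is_posP.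
by apply/in_map_iff; exists q; split=> //; apply/filter_In; split=> //; apply/is_negP.
Qed.

(* Soundness of elimination: a solution of the eliminated system extends to h_n,
   since the lower bounds on h_n (from p) lie below the upper bounds (from q). *)
Lemma eliminate_feasible n rows : feasible n (eliminate n rows) -> feasible n.+1 rows.
Proof.
move=> [h Hh].
pose bound (p : ineq) := (snd p - lhs n p h) / fst p n.
have Hsep : forall a b,
    In a (map bound (filter (fun r => is_pos (fst r n)) rows)) ->
    In b (map bound (filter (fun r => is_neg (fst r n)) rows)) -> a <= b.
{ move=> a b /in_map_iff [p [<- /filter_In [Hp /is_posP Hpn]]]
             /in_map_iff [q [<- /filter_In [Hq /is_negP Hqn]]].
  have := Hh _ (cancel_last_in Hp Hq Hpn Hqn).
  rewrite /lhs /cancel_last /= (rsum_ext (g := fun i : 'I_n =>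
     - fst q n * (fst p i * h i) + fst p n * (fst q i * h i))); last by move=> i; ring.
  rewrite rsum_add !rsum_scal -!/(lhs n _ h) => Hpq.
  rewrite /bound; apply: (Rmult_le_reg_l (fst p n)) => //.
  apply: (Rmult_le_reg_l (- fst q n)); first lra.
  have -> : - fst q n * (fst p n * ((snd p - lhs n p h) / fst p n)) =
            - fst q n * (snd p - lhs n p h) by field; lra.
  have -> : - fst q n * (fst p n * ((snd q - lhs n q h) / fst q n)) =
            - (fst p n * (snd q - lhs n q h)) by field; lra.
  lra. }
have [x [Hlo Hup]] := separate_lists Hsep.
exists (fun i => if (i == n)%N then x else h i) => r Hr.
rewrite lhsS lhs_upd eqxx.
have Hdiv : fst r n <> 0 -> fst r n * bound r = snd r - lhs n r h.
  by move=> ?; rewrite /bound; field.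
case: (Rtotal_order (fst r n) 0) => [Hneg|[Hz|Hpos]].
- have := Hup _ (in_map _ _ _ (proj2 (filter_In _ _ _) (conj Hr (proj2 (is_negP _) Hneg)))).
  move/(Rmult_le_compat_neg_l (fst r n) _ _ (Rlt_le _ _ Hneg)); rewrite Hdiv; lra.
- have := Hh r; rewrite /eliminate in_app_iff filter_In is_zeroP.
  by move/(_ (or_introl (conj Hr Hz))); rewrite Hz; lra.
- have := Hlo _ (in_map _ _ _ (proj2 (filter_In _ _ _) (conj Hr (proj2 (is_posP _) Hpos)))).
  move/(Rmult_le_compat_l (fst r n) _ _ (Rlt_le _ _ Hpos)); rewrite Hdiv; lra.
Qed.

Lemma eliminate_cone n rows r : In r (eliminate n rows) -> cone rows r.
Proof.
case/in_eliminate => [[Hr _]|[p [q [Hp Hq Hpn Hqn ->]]]]; first exact: cone_in.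
by apply: cone_add; apply: cone_scale; try apply: cone_in => //; lra.
Qed.

Lemma eliminate_last_zero n rows r : cone (eliminate n rows) r -> fst r n = 0.
Proof.
elim=> [r' /in_eliminate [[_ ->]|[p [q [_ _ _ _ ->]]]]|a b _ /= -> _ ->|c a _ _ /= ->];
  rewrite /= ?Rplus_0_r ?Rmult_0_r //; ring.
Qed.

Theorem fourier_motzkin n rows : ~ feasible n rows ->
  exists r, [/\ cone rows r, forall i, (i < n)%N -> fst r i = 0 & snd r > 0].
Proof.
elim: n rows => [|n IH] rows Hinf.
- apply: NNPP => Hno; apply: Hinf; exists (fun _ => 0) => r Hr.
  rewrite /lhs /rsum big_ord0; apply: Rnot_lt_ge => Hlt; apply: Hno.
  by exists r; split=> //; exact: cone_in.
- have [r [Hc Hz Hpos]] := IH _ (fun H => Hinf (eliminate_feasible H)).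
  exists r; split=> //; first exact: cone_trans (@eliminate_cone n rows) _ Hc.
  move=> i; rewrite ltnS leq_eqVlt => /orP [/eqP ->|Hi]; last exact: Hz.
  exact: eliminate_last_zero Hc.
Qed.

Definition ext k (v : 'I_k -> R) : nat -> R :=
  fun i => if insub i is Some j then v j else 0.

Lemma ext_ord k (v : 'I_k -> R) (i : 'I_k) : ext v i = v i.
Proof. by rewrite /ext valK. Qed.

Lemma In_enum (T : finType) (x : T) : In x (enum T).
Proof.
have : x \in enum T by rewrite mem_enum.
elim: (enum T) => [|a s IH] //=; rewrite in_cons => /orP [/eqP ->|/IH]; tauto.
Qed.

Definition delta_vec k (j0 : 'I_k) : 'I_k -> R := fun j => if j == j0 then 1 else 0.

Lemma rsum_delta_vec k (j0 : 'I_k) (f : 'I_k -> R) :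
  rsum (fun j => delta_vec j0 j * f j) = f j0.
Proof.
rewrite -(rsum_delta j0 f); apply: rsum_ext => j.
by rewrite /delta_vec; case: (j == j0); ring.
Qed.

Definition row_if (P : Prop) (r : ineq) : list ineq :=
  if excluded_middle_informative P then r :: nil else nil.

Lemma in_row_if P r r' : In r' (row_if P r) <-> P /\ r' = r.
Proof. by rewrite /row_if; case: excluded_middle_informative => /= HP; intuition. Qed.

Section Farkas.
Variables (n d : nat) (X : 'I_d -> 'I_n -> R) (sel1 sel2 : 'I_d -> Prop) (tau : 'I_n -> R).

(* The system  <h, X_j> >= 0 (j in sel1),  <h, X_j> <= 0 (j in sel2),  <h, tau> <= -1. *)
Definition farkas_rows : list ineq :=
  ((fun i => - ext tau i), 1) ::
  flat_map (fun j => row_if (sel1 j) (ext (X j), 0) ++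
                     row_if (sel2 j) ((fun i => - ext (X j) i), 0)) (enum 'I_d).

Lemma in_farkas_rows r : In r farkas_rows ->
  r = ((fun i => - ext tau i), 1) \/
  exists j, (sel1 j /\ r = (ext (X j), 0)) \/ (sel2 j /\ r = ((fun i => - ext (X j) i), 0)).
Proof.
case=> [<-|]; first by left.
move/in_flat_map => [j [_ /in_app_iff [/in_row_if|/in_row_if]]] H; right; exists j; tauto.
Qed.

Definition dual_form (r : ineq) : Prop :=
  exists (y y' : 'I_d -> R) (z : R), [/\ 0 <= z, forall j, 0 <= y j /\ 0 <= y' j,
     forall j, ~ sel1 j -> y j = 0, forall j, ~ sel2 j -> y' j = 0 &
     snd r = z /\ forall i : 'I_n, fst r i = rsum (fun j => (y j - y' j) * X j i) - z * tau i].

(* The generators have dual form (delta vectors for the X_j, z = 1 for tau). *)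
Lemma dual_form_rows r : In r farkas_rows -> dual_form r.
Proof.
case/in_farkas_rows => [->|[j [[Hj ->]|[Hj ->]]]].
- exists (fun _ => 0), (fun _ => 0), 1; split; try lra; try (by move=> *; lra).
  split=> // i /=; rewrite ext_ord rsum_eq0 => [|j]; ring.
- exists (delta_vec j), (fun _ => 0), 0; split=> //; first lra.
  + by move=> j'; rewrite /delta_vec; case: (j' == j); lra.
  + by move=> j' Hj'; rewrite /delta_vec; case: eqP => // E; rewrite E in Hj'.
  + split=> // i /=; rewrite ext_ord (rsum_ext (g := fun j' => delta_vec j j' * X j' i)).
      by rewrite rsum_delta_vec; ring.
    by move=> j'; ring.
- exists (fun _ => 0), (delta_vec j), 0; split=> //; first lra.
  + by move=> j'; rewrite /delta_vec; case: (j' == j); lra.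
  + by move=> j' Hj'; rewrite /delta_vec; case: eqP => // E; rewrite E in Hj'.
  + split=> // i /=; rewrite ext_ord (rsum_ext (g := fun j' => -1 * (delta_vec j j' * X j' i))).
      by rewrite rsum_scal rsum_delta_vec; ring.
    by move=> j'; ring.
Qed.

Lemma dual_form_cone r : cone farkas_rows r -> dual_form r.
Proof.
elim=> [r' /dual_form_rows //|a b _ Ha _ Hb|c a Hc _ Ha].
- move: Ha Hb => [y1 [y1' [z1 [Hz1 Hy1 Hs1 Hs1' [Hq1 Ha1]]]]]
                 [y2 [y2' [z2 [Hz2 Hy2 Hs2 Hs2' [Hq2 Ha2]]]]].
  exists (fun j => y1 j + y2 j), (fun j => y1' j + y2' j), (z1 + z2); split; first lra.
  + by move=> j; have := Hy1 j; have := Hy2 j; lra.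
  + by move=> j Hj; rewrite Hs1 // Hs2 //; lra.
  + by move=> j Hj; rewrite Hs1' // Hs2' //; lra.
  + split=> [|i]; first by rewrite /= Hq1 Hq2.
    rewrite /= Ha1 Ha2 (rsum_ext (f := fun j => (y1 j + y2 j - (y1' j + y2' j)) * X j i)
      (g := fun j => (y1 j - y1' j) * X j i + (y2 j - y2' j) * X j i)).
      by rewrite rsum_add; ring.
    by move=> j; ring.
- move: Ha => [y [y' [z [Hz Hy Hs Hs' [Hq Ha]]]]].
  exists (fun j => c * y j), (fun j => c * y' j), (c * z); split.
  + exact: Rmult_le_pos.
  + by move=> j; have := Hy j => -[? ?]; split; apply: Rmult_le_pos.
  + by move=> j Hj; rewrite Hs //; ring.
  + by move=> j Hj; rewrite Hs' //; ring.
  + split=> [|i]; first by rewrite /= Hq.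
    rewrite /= Ha (rsum_ext (f := fun j => (c * y j - c * y' j) * X j i)
      (g := fun j => c * ((y j - y' j) * X j i))) ?rsum_scal;
      [ring | move=> j; ring].
Qed.

Theorem farkas :
  (exists h : 'I_n -> R, [/\ forall j, sel1 j -> dot h (X j) >= 0,
     forall j, sel2 j -> dot h (X j) <= 0 & dot h tau < 0])
  \/ (exists y y' : 'I_d -> R, [/\ forall j, 0 <= y j /\ 0 <= y' j,
     forall j, ~ sel1 j -> y j = 0, forall j, ~ sel2 j -> y' j = 0 &
     forall i, tau i = rsum (fun j => (y j - y' j) * X j i)]).
Proof.
case: (classic (feasible n farkas_rows)) => [[h Hh]|Hinf].
- left; exists (fun i => h i).
  have Hlhs (v : 'I_n -> R) c : lhs n (ext v, c) h = dot (fun i : 'I_n => h i) v.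
    by rewrite /lhs /dot; apply: rsum_ext => i /=; rewrite ext_ord; ring.
  have Hlhs_opp (v : 'I_n -> R) c :
      lhs n ((fun i => - ext v i), c) h = - dot (fun i : 'I_n => h i) v.
    by rewrite -dot_opp /lhs /dot; apply: rsum_ext => i /=; rewrite ext_ord; ring.
  have Hrow1 j : sel1 j -> In (ext (X j), 0) farkas_rows.
    move=> Hj; right; apply/in_flat_map; exists j; split; first exact: In_enum.
    by apply/in_app_iff; left; apply/in_row_if.
  have Hrow2 j : sel2 j -> In ((fun i => - ext (X j) i), 0) farkas_rows.
    move=> Hj; right; apply/in_flat_map; exists j; split; first exact: In_enum.
    by apply/in_app_iff; right; apply/in_row_if.
  split.
  + by move=> j /Hrow1 /Hh; rewrite Hlhs.
  + by move=> j /Hrow2 /Hh; rewrite Hlhs_opp /=; lra.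
  + by have := Hh _ (or_introl erefl); rewrite Hlhs_opp /=; lra.
- right; have [r [Hc Hz Hpos]] := fourier_motzkin Hinf.
  have [y [y' [z [_ Hy Hs Hs' [Hq Ha]]]]] := dual_form_cone Hc.
  have Hzpos : 0 < z by rewrite -Hq; lra.
  exists (fun j => y j / z), (fun j => y' j / z); split.
  + move=> j; have [? ?] := Hy j.
    by split; apply: Rmult_le_pos => //; left; apply: Rinv_0_lt_compat.
  + by move=> j Hj; rewrite Hs // /Rdiv Rmult_0_l.
  + by move=> j Hj; rewrite Hs' // /Rdiv Rmult_0_l.
  + move=> i; have := Ha i; rewrite Hz ?ltn_ord // => H.
    rewrite (rsum_ext (g := fun j => / z * ((y j - y' j) * X j i))) ?rsum_scal.
      by field_simplify_eq; lra.
    by move=> j; rewrite /Rdiv; ring.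
Qed.

End Farkas.

Definition sup_close (T : Type) (e : R) (p q : T -> R) : Prop :=
  forall t, Rabs (p t - q t) < e.

Lemma Rabs_bounds x a : Rabs x <= a -> - a <= x <= a.
Proof. by have := Rle_abs x; have := Rle_abs (- x); rewrite Rabs_Ropp; lra. Qed.

Lemma pow2_ge_INR k : INR k <= 2 ^ k.
Proof.
elim: k => [|k IH]; first by simpl; lra.
rewrite S_INR /=; have : 1 <= 2 ^ k by apply: pow_R1_Rle; lra.
lra.
Qed.

Lemma halvings_small (w e : R) : 0 < e -> exists k, w / 2 ^ k < e.
Proof.
move=> He; have [k Hk] := INR_unbounded (w / e); exists k.
have H2 := pow2_ge_INR k; have Hp : 0 < 2 ^ k by apply: pow_lt; lra.
apply/(Rmult_lt_reg_r (2 ^ k)) => //; rewrite /Rdiv Rmult_assoc Rinv_l ?Rmult_1_r; last lra.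
have := Rmult_lt_compat_r e (w / e) (2 ^ k) He ltac:(lra).
by rewrite /Rdiv Rmult_assoc Rinv_l; lra.
Qed.

Lemma nested_boxes_point (T : Type) (lo hi : nat -> T -> R) :
  (forall k t, lo k t <= hi k t) ->
  (forall k t, lo k t <= lo k.+1 t /\ hi k.+1 t <= hi k t) ->
  exists p : T -> R, forall k t, lo k t <= p t <= hi k t.
Proof.
move=> Hwf Hnest.
have Hlo_grow t : Un_growing (fun k => lo k t) by move=> k; exact: (proj1 (Hnest k t)).
have Hhi_decr t : Un_decreasing (fun k => hi k t) by move=> k; exact: (proj2 (Hnest k t)).
have Hlo_hi k m t : lo k t <= hi m t.
  have := growing_prop _ _ _ (Hlo_grow t) (Nat.le_max_l k m).
  have := decreasing_prop _ _ _ (Hhi_decr t) (Nat.le_max_r k m).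
  have := Hwf (Nat.max k m) t; lra.
have Hlim t : {x | Un_cv (fun k => lo k t) x}.
  by apply: growing_cv => //; exists (hi 0%nat t) => x [k ->]; exact: Hlo_hi.
exists (fun t => proj1_sig (Hlim t)) => k t; case: (Hlim t) => x Hx /=; split.
- exact: growing_ineq (Hlo_grow t) Hx k.
- apply: (Rle_cv_lim (fun m => Hlo_hi m k t) Hx).
  by move=> e He; exists 0%nat => m _; rewrite /R_dist Rminus_diag Rabs_R0.
Qed.

(* Heine-Borel: in R^T with T finite, a bounded closed set K is compact, here in the
   form "a cover by sets containing a sup-ball around each point of K is finite".
   Proof by repeated bisection of a box that cannot be finitely covered. *)
Section HeineBorel.
Variables (T : Type) (ts : list T) (ts_complete : forall t, In t ts).
Variables (I : Type) (K : (T -> R) -> Prop) (U : I -> (T -> R) -> Prop).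

Definition box := ((T -> R) * (T -> R))%type.
Definition in_box (b : box) (p : T -> R) := forall t, fst b t <= p t <= snd b t.
Definition width (b : box) (t : T) := snd b t - fst b t.
Definition sub_box (b' b : box) :=
  forall t, fst b t <= fst b' t /\ fst b' t <= snd b' t /\ snd b' t <= snd b t.
Definition finitely_covered (b : box) :=
  exists L : list I, forall p, K p -> in_box b p -> exists i, In i L /\ U i p.

Definition update (f : T -> R) (t : T) (v : R) : T -> R :=
  fun s => if excluded_middle_informative (s = t) then v else f s.

Lemma update_same f t v : update f t v t = v.
Proof. by rewrite /update; case: excluded_middle_informative. Qed.

Lemma update_other f t v s : s <> t -> update f t v s = f s.
Proof. by rewrite /update; case: excluded_middle_informative. Qed.

Definition lower_half (b : box) t : box := (fst b, update (snd b) t ((fst b t + snd b t) / 2)).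
Definition upper_half (b : box) t : box := (update (fst b) t ((fst b t + snd b t) / 2), snd b).

Lemma halves_cover b t p : in_box b p -> in_box (lower_half b t) p \/ in_box (upper_half b t) p.
Proof.
move=> Hp; case: (Rle_lt_dec (p t) ((fst b t + snd b t) / 2)) => Hpt; [left|right];
  move=> s; case: (classic (s = t)) => [->|Hs] /=;
  rewrite ?update_same ?update_other //; have := Hp t; have := Hp s; lra.
Qed.

Lemma halves_sub b t : (forall s, fst b s <= snd b s) ->
  sub_box (lower_half b t) b /\ sub_box (upper_half b t) b /\
  width (lower_half b t) t = width b t / 2 /\ width (upper_half b t) t = width b t / 2.
Proof.
move=> Hb; rewrite /width /= !update_same; split; [|split; [|split]]; try lra;
  move=> s; case: (classic (s = t)) => [->|Hs] /=;
  rewrite ?update_same ?update_other //; have := Hb t; have := Hb s; lra.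
Qed.

Lemma uncovered_half b t : ~ finitely_covered b ->
  ~ finitely_covered (lower_half b t) \/ ~ finitely_covered (upper_half b t).
Proof.
move=> Hb; apply: NNPP => H; apply: Hb.
have [L1 H1] : finitely_covered (lower_half b t) by apply: NNPP => H'; apply: H; left.
have [L2 H2] : finitely_covered (upper_half b t) by apply: NNPP => H'; apply: H; right.
exists (L1 ++ L2) => p Kp /(halves_cover t) [Bp|Bp].
- by have [i [Hi Ui]] := H1 p Kp Bp; exists i; rewrite in_app_iff; tauto.
- by have [i [Hi Ui]] := H2 p Kp Bp; exists i; rewrite in_app_iff; tauto.
Qed.

Lemma uncovered_bisection (ss : list T) b :
  ~ finitely_covered b -> (forall t, fst b t <= snd b t) ->
  exists b', [/\ ~ finitely_covered b', sub_box b' b &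
    forall t, In t ss -> width b' t <= width b t / 2].
Proof.
elim: ss b => [|t ss IH] b Hb Ho.
- by exists b; split=> // t; have := Ho t; lra.
- have [Hl [Hu [Wl Wu]]] := halves_sub t Ho.
  have [b1 [Hb1 Hs1 Hw1]] : exists b1, [/\ ~ finitely_covered b1, sub_box b1 b &
                                           width b1 t <= width b t / 2].
    by case: (uncovered_half t Hb) => H; [exists (lower_half b t) | exists (upper_half b t)];
      split=> //; lra.
  have [b2 [Hb2 Hs2 Hw2]] := IH b1 Hb1 (fun s => proj1 (proj2 (Hs1 s))).
  exists b2; split=> // [s|s [<-|Hs]]; rewrite /width.
  + by have := Hs1 s; have := Hs2 s; lra.
  + by have := Hs2 t; rewrite /width in Hw1; lra.
  + by have := Hw2 s Hs; have := Hs1 s; rewrite /width; lra.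
Qed.

Lemma uncovered_sequence b0 : ~ finitely_covered b0 -> (forall t, fst b0 t <= snd b0 t) ->
  exists bs : nat -> box, bs 0%nat = b0 /\ forall k, ~ finitely_covered (bs k) /\
    sub_box (bs k.+1) (bs k) /\ forall t, width (bs k.+1) t <= width (bs k) t / 2.
Proof.
move=> Hb0 Ho0.
have Hstep b : exists b' : box, ~ finitely_covered b /\ (forall t, fst b t <= snd b t) ->
    [/\ ~ finitely_covered b', sub_box b' b & forall t, width b' t <= width b t / 2].
  case: (classic (~ finitely_covered b /\ forall t, fst b t <= snd b t)) => [[Hb Ho]|H];
    last by exists b.
  have [b' [H1 H2 H3]] := uncovered_bisection ts Hb Ho.
  by exists b' => _; split=> // t; exact: H3.
pose next b := proj1_sig (constructive_indefinite_description _ (Hstep b)).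
have Hnext b := proj2_sig (constructive_indefinite_description _ (Hstep b)).
pose bs := fix bs (k : nat) : box := if k is k'.+1 then next (bs k') else b0.
have Hinv k : ~ finitely_covered (bs k) /\ forall t, fst (bs k) t <= snd (bs k) t.
  elim: k => [|k [Hk Ok]] //; have [H1 H2 _] := Hnext (bs k) (conj Hk Ok).
  by split=> // t; exact: (proj1 (proj2 (H2 t))).
exists bs; split=> // k; have [H1 H2 H3] := Hnext (bs k) (Hinv k).
by split; [exact: (proj1 (Hinv k)) | split].
Qed.

(* The box [-|M|, |M|]^T containing K cannot be finitely covered if the theorem
   fails; nested uncovered boxes shrink to a point p of K (K is closed), and one
   member of the cover containing a ball around p covers a small box. *)
Theorem heine_borel (M : R) :
  (forall p, K p -> forall t, Rabs (p t) <= M) ->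
  (forall p, (forall e, e > 0 -> exists q, K q /\ sup_close e p q) -> K p) ->
  (forall p, K p -> exists i e, e > 0 /\ forall q, K q -> sup_close e p q -> U i q) ->
  exists L : list I, forall p, K p -> exists i, In i L /\ U i p.
Proof.
move=> Hbd Hcl Hcov; apply: NNPP => Hno.
pose b0 : box := (fun _ => - Rabs M, fun _ => Rabs M).
have Hb0 : ~ finitely_covered b0.
  move=> [L HL]; apply: Hno; exists L => p Kp; apply: HL => // t /=.
  by have := Rle_abs M; have := Hbd p Kp t; move/Rabs_bounds; lra.
have [bs [Hbs0 Hbs]] := uncovered_sequence Hb0 (fun t => ltac:(have := Rabs_pos M; simpl; lra)).
have Hwf k t : fst (bs k) t <= snd (bs k) t.
  case: k => [|k]; first by rewrite Hbs0 /=; have := Rabs_pos M; lra.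
  exact: (proj1 (proj2 (proj1 (proj2 (Hbs k)) t))).
have Hnest k t : fst (bs k) t <= fst (bs k.+1) t /\ snd (bs k.+1) t <= snd (bs k) t.
  by have := proj1 (proj2 (Hbs k)) t; tauto.
have Hwidth k t : width (bs k) t <= 2 * Rabs M / 2 ^ k.
  elim: k => [|k IH]; first by rewrite Hbs0 /width /=; lra.
  by have := proj2 (proj2 (Hbs k)) t; rewrite /= /Rdiv Rinv_mult; lra.
have [p Hp] := nested_boxes_point (lo := fun k t => fst (bs k) t) (hi := fun k t => snd (bs k) t)
  Hwf Hnest.
have Hclose k q : in_box (bs k) q -> forall t, Rabs (p t - q t) <= 2 * Rabs M / 2 ^ k.
  move=> Hq t; apply: Rabs_le; have := Hq t; have := Hp k t; have := Hwidth k t.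
  rewrite /width; lra.
have Hmeet k : exists q, K q /\ in_box (bs k) q.
  apply: NNPP => H; apply: (proj1 (Hbs k)); exists nil => q Kq Bq.
  by exfalso; apply: H; exists q.
have Kp : K p.
  apply: Hcl => e He; have [k Hk] := halvings_small (2 * Rabs M) He.
  have [q [Kq Bq]] := Hmeet k; exists q; split=> // t.
  by have := Hclose k q Bq t; lra.
have [i [e [He Hi]]] := Hcov p Kp.
have [k Hk] := halvings_small (2 * Rabs M) He.
apply: (proj1 (Hbs k)); exists (i :: nil) => q Kq Bq; exists i; split; first by left.
by apply: Hi => // t; have := Hclose k q Bq t; lra.
Qed.

End HeineBorel.

Lemma list_argmin (A : Type) (P : A -> Prop) (f : A -> R) (L : list A) :
  (exists q, In q L /\ P q) ->
  exists qm, [/\ In qm L, P qm & forall q, In q L -> P q -> f qm <= f q].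
Proof.
elim: L => [|a L IH] [q [Hq Pq]] //.
case: (classic (exists q, In q L /\ P q)) => [Hex|Hnex].
- have [qm [H1 H2 H3]] := IH Hex.
  case: (classic (P a /\ f a < f qm)) => [[Pa Ha]|Hna].
  + exists a; split=> [| |q' [<-|Hq'] Pq']; [by left | done | lra |].
    by have := H3 q' Hq' Pq'; lra.
  + exists qm; split=> [| |q' [<-|Hq'] Pq']; [by right | done | | exact: H3].
    by apply: Rnot_lt_le => Hlt; apply: Hna.
- have Pa : P a by case: Hq => [->|Hq] //; exfalso; apply: Hnex; exists q.
  exists a; split=> [| |q' [<-|Hq'] Pq']; [by left | done | lra |].
  by exfalso; apply: Hnex; exists q'.
Qed.

Lemma shrink_lt (c C : R) : 0 < c -> 0 <= C -> c / (1 + C) * C < c.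
Proof.
move=> Hc HC; apply: (Rmult_lt_reg_r (1 + C)); first lra.
have -> : c / (1 + C) * C * (1 + C) = c * C by field; lra.
nra.
Qed.

Lemma dot_ge_closed n (P : ('I_n -> R) -> Prop) (v : 'I_n -> R) (c : R) (p : 'I_n -> R) :
  (forall q, P q -> dot q v >= c) ->
  (forall e, e > 0 -> exists q, P q /\ sup_close e p q) -> dot p v >= c.
Proof.
move=> Hq Hp; apply: Rnot_lt_ge => Hlt.
pose C := rsum (fun i => Rabs (v i)).
have HC : 0 <= C by apply: rsum_ge0 => i; exact: Rabs_pos.
have [q [Pq Hn]] := Hp ((c - dot p v) / (1 + C)) ltac:(apply: Rdiv_lt_0_compat; lra).
have := @dot_diff_bound n q p v _ (fun i => ltac:(rewrite Rabs_minus_sym; exact: Hn i)).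
have := Hq q Pq; have := @shrink_lt (c - dot p v) C ltac:(lra) HC; rewrite -/C; lra.
Qed.

Lemma linear_min n (P : ('I_n -> R) -> Prop) (tau : 'I_n -> R) (M : R) :
  (forall p, P p -> forall t, Rabs (p t) <= M) ->
  (forall p, (forall e, e > 0 -> exists q, P q /\ sup_close e p q) -> P p) ->
  (exists mu0, P mu0) ->
  exists mu, P mu /\ forall nu, P nu -> dot mu tau <= dot nu tau.
Proof.
move=> Hbd Hcl [mu0 Hmu0]; apply: NNPP => Hno.
have Hlower mu : P mu -> exists q, P q /\ dot q tau < dot mu tau.
  move=> Pmu; apply: NNPP => H; apply: Hno; exists mu; split=> // nu Pnu.
  by apply: Rnot_lt_le => Hlt; apply: H; exists nu.
pose C := rsum (fun i => Rabs (tau i)).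
have HC : 0 <= C by apply: rsum_ge0 => i; exact: Rabs_pos.
(* Each point has a neighbourhood on which one fixed point of P does better. *)
have Hcov mu : P mu -> exists q e, e > 0 /\
    forall nu, P nu -> sup_close e mu nu -> P q /\ dot q tau < dot nu tau.
  move=> Pmu; have [q [Pq Hq]] := Hlower mu Pmu.
  exists q, ((dot mu tau - dot q tau) / (1 + C)); split.
    by apply: Rdiv_lt_0_compat; lra.
  move=> nu Pnu Hnear; split=> //.
  have := dot_diff_bound tau Hnear.
  by have := @shrink_lt (dot mu tau - dot q tau) C ltac:(lra) HC; rewrite -/C; lra.
have [L HL] := heine_borel (@In_enum _) (U := fun q mu => P q /\ dot q tau < dot mu tau)
  Hbd Hcl Hcov.
have [q0 [Hq0 [Pq0 _]]] := HL mu0 Hmu0.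
have [qm [Hqm Pqm Hmin]] := list_argmin (fun q => dot q tau) (ex_intro _ q0 (conj Hq0 Pq0)).
have [q [Hq [Pq Hlt]]] := HL qm Pqm; have := Hmin q Hq Pq; lra.
Qed.

Lemma small_step d (J : 'I_d -> Prop) (a s : 'I_d -> R) :
  (forall j, ~ J j -> 0 < s j) ->
  exists e, 0 < e /\ forall j, ~ J j -> e * Rabs (a j) < s j.
Proof.
move=> Hs.
suff [e [He H]] : exists e, 0 < e /\ forall j, In j (enum 'I_d) -> ~ J j -> e * Rabs (a j) < s j.
  by exists e; split=> // j; apply: H; exact: In_enum.
elim: (enum 'I_d) => [|j l [e [He H]]]; first by exists 1; split=> [|? []]; lra.
case: (classic (J j)) => Hj.
- by exists e; split=> // j' [<-|Hj'] //; exact: H.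
- have Hsj := Hs j Hj; have Ha := Rabs_pos (a j).
  exists (Rmin e (s j / (Rabs (a j) + 1))); split.
    by apply: Rmin_pos => //; apply: Rdiv_lt_0_compat; lra.
  move=> j' [<-|Hj'] Hnj.
  + apply: Rle_lt_trans (Rmult_le_compat_r _ _ _ Ha (Rmin_r _ _)) _.
    have -> : s j / (Rabs (a j) + 1) * Rabs (a j) = s j / (1 + Rabs (a j)) * Rabs (a j).
      by rewrite Rplus_comm.
    exact: shrink_lt.
  + apply: Rle_lt_trans (Rmult_le_compat_r _ _ _ (Rabs_pos _) (Rmin_l _ _)) _.
    exact: H.
Qed.

Section LinearProgram.
Variables (n d : nat) (X : 'I_d -> 'I_n -> R) (lam : 'I_d -> R).

Definition face_eq (Z : 'I_d -> Prop) (mu : 'I_n -> R) : Prop :=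
  Defs.Delta X lam mu /\ forall j, Z j -> dot mu (X j) = lam j.

Lemma face_eq_closed Z p :
  (forall e, e > 0 -> exists q, face_eq Z q /\ sup_close e p q) -> face_eq Z p.
Proof.
move=> Hp; split=> [j|j Hj].
- by apply: dot_ge_closed Hp => q [Hq _]; exact: Hq.
- have H1 := dot_ge_closed (fun q (Hq : face_eq Z q) => proj1 Hq j) Hp.
  have H2 : dot p (fun i => - X j i) >= - lam j.
    by apply: dot_ge_closed Hp => q [_ Hq]; rewrite dot_opp Hq //; lra.
  by rewrite dot_opp in H2; lra.
Qed.

(* Optimality (KKT) conditions for minimizing <mu, tau> over the face face_eq Z of
   a bounded Delta: at a minimizer mu, tau = sum (y_j - y'_j) X_j with y >= 0
   supported on the constraints active at mu and y' >= 0 supported on Z.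
   Otherwise Farkas gives a feasible direction decreasing <mu, tau>. *)
Theorem lp_optimality (Z : 'I_d -> Prop) (tau : 'I_n -> R) (M : R) :
  (forall mu, Defs.Delta X lam mu -> forall i, Rabs (mu i) <= M) ->
  (exists mu0, face_eq Z mu0) ->
  exists mu, face_eq Z mu /\
    exists y y' : 'I_d -> R, [/\ forall j, 0 <= y j /\ 0 <= y' j,
     forall j, dot mu (X j) <> lam j -> y j = 0, forall j, ~ Z j -> y' j = 0 &
     forall i, tau i = rsum (fun j => (y j - y' j) * X j i)].
Proof.
move=> Hbd Hne.
have [mu [Pmu Hmin]] := linear_min tau (fun p Pp => Hbd p (proj1 Pp)) (@face_eq_closed Z) Hne.
exists mu; split=> //.
pose J j := dot mu (X j) = lam j.
case: (farkas X J Z tau) => [[h [H1 H2 H3]]|[y [y' [Hy Hs Hs' Ht]]]]; last by exists y, y'.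
exfalso.
have Hslack j : ~ J j -> 0 < dot mu (X j) - lam j.
  by move=> Hj; have := proj1 Pmu j; rewrite /J in Hj; have : dot mu (X j) <> lam j by []; lra.
have [e [He He']] := small_step (fun j => dot h (X j)) Hslack.
(* Moving from mu in direction h by e stays in the face and decreases <., tau>. *)
have Pmu' : face_eq Z (fun i => mu i + e * h i).
  split=> j; rewrite dot_lin.
  - case: (classic (J j)) => Hj.
    + have := Rmult_le_pos e (dot h (X j)) ltac:(lra) (Rge_le _ _ (H1 j Hj)).
      by rewrite /J in Hj; lra.
    + have := He' j Hj; have := Rle_abs (- dot h (X j)); rewrite Rabs_Ropp => Ha Hb.
      have : e * - dot h (X j) <= e * Rabs (dot h (X j)) by apply: Rmult_le_compat_l; lra.
      by have := Hslack j Hj; lra.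
  - move=> Hj; have HJ : J j := proj2 Pmu j Hj.
    have := H2 j Hj; have := H1 j HJ; rewrite /J in HJ => ? ?.
    have -> : dot h (X j) = 0 by lra.
    by rewrite HJ; ring.
have := Hmin _ Pmu'; rewrite dot_lin; have := Rmult_lt_compat_l e _ _ He H3; lra.
Qed.

End LinearProgram.

Definition modsq (w : R * R) : R := fst w * fst w + snd w * snd w.

Lemma modsq_ge0 w : 0 <= modsq w.
Proof. by rewrite /modsq; nra. Qed.

Lemma modsq_pos w : w <> (0, 0) -> 0 < modsq w.
Proof.
case: w => a b /= Hw; rewrite /modsq /=; case: (modsq_ge0 (a, b)) => // H0.
exfalso; apply: Hw; rewrite /modsq /= in H0.
have Ha : a = 0 by nra.
have Hb : b = 0 by nra.
by rewrite Ha Hb.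
Qed.

Lemma coord_bound x y : x * x + y * y <= 1 -> Rabs x <= 1.
Proof. by move=> H; apply: Rabs_le; nra. Qed.

Lemma modsq_continuous (a : R * R) (dl : R) : 0 < dl -> exists e, 0 < e /\ forall b : R * R,
   Rabs (fst a - fst b) < e -> Rabs (snd a - snd b) < e -> Rabs (modsq a - modsq b) < dl.
Proof.
move=> Hd; pose C := 2 * Rabs (fst a) + 2 * Rabs (snd a) + 2.
have HC : 0 < C by rewrite /C; have := Rabs_pos (fst a); have := Rabs_pos (snd a); lra.
exists (Rmin 1 (dl / (2 * C))); split.
  by apply: Rmin_pos; [lra | apply: Rdiv_lt_0_compat; lra].
move=> b H1 H2; set e := Rmin 1 (dl / (2 * C)) in H1 H2.
have He1 : e <= 1 by exact: Rmin_l.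
have He2 : e * C <= dl / 2.
  have -> : dl / 2 = dl / (2 * C) * C by field; lra.
  by apply: Rmult_le_compat_r; [lra | exact: Rmin_r].
have Hsum x y : Rabs (x - y) < e -> Rabs (x + y) <= 2 * Rabs x + 1.
  move=> Hxy; have -> : x + y = 2 * x - (x - y) by ring.
  apply: Rle_trans (Rabs_triang _ _) _; rewrite Rabs_Ropp Rabs_mult (Rabs_pos_eq 2); lra.
have -> : modsq a - modsq b =
    (fst a - fst b) * (fst a + fst b) + (snd a - snd b) * (snd a + snd b) by rewrite /modsq; ring.
apply: Rle_lt_trans (Rabs_triang _ _) _; rewrite !Rabs_mult.
have A := Rmult_le_compat _ _ _ _ (Rabs_pos _) (Rabs_pos _) (Rlt_le _ _ H1) (Hsum _ _ H1).
have B := Rmult_le_compat _ _ _ _ (Rabs_pos _) (Rabs_pos _) (Rlt_le _ _ H2) (Hsum _ _ H2).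
rewrite /C in He2; lra.
Qed.

Lemma modsq_limit_le (a : R * R) (c : R) :
  (forall e, 0 < e -> exists b : R * R,
     [/\ Rabs (fst a - fst b) < e, Rabs (snd a - snd b) < e & modsq b <= c]) ->
  modsq a <= c.
Proof.
move=> H; apply: Rnot_lt_le => Hlt.
have [e [He He']] := modsq_continuous a (dl := modsq a - c) ltac:(lra).
have [b [H1 H2 H3]] := H e He; have := He' b H1 H2; move/Rabs_def2; lra.
Qed.

Lemma modsq_limit_ge (a : R * R) (c : R) :
  (forall e, 0 < e -> exists b : R * R,
     [/\ Rabs (fst a - fst b) < e, Rabs (snd a - snd b) < e & c <= modsq b]) ->
  c <= modsq a.
Proof.
move=> H; apply: Rnot_lt_le => Hlt.
have [e [He He']] := modsq_continuous a (dl := c - modsq a) ltac:(lra).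
have [b [H1 H2 H3]] := H e He; have := He' b H1 H2; move/Rabs_def2; lra.
Qed.

Lemma expact_imag d (b : 'I_d -> R) (z : Cpt d) j :
  expact (@zeroR d) b z j =
  (exp (- (2 * PI * b j)) * fst (z j), exp (- (2 * PI * b j)) * snd (z j)).
Proof. by rewrite /expact /cmul /zeroR /= Rmult_0_r cos_0 sin_0; f_equal; ring. Qed.

Lemma expact_zero d (w : Cpt d) : expact (@zeroR d) (@zeroR d) w = w.
Proof.
apply: functional_extensionality => j; rewrite expact_imag /zeroR Rmult_0_r Ropp_0 exp_0.
by rewrite !Rmult_1_l; case: (w j).
Qed.

Lemma modsq_expact_imag d (b : 'I_d -> R) (z : Cpt d) j :
  modsq (expact (@zeroR d) b z j) = exp (- (4 * PI * b j)) * modsq (z j).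
Proof.
rewrite expact_imag /modsq /=.
have -> : - (4 * PI * b j) = - (2 * PI * b j) + - (2 * PI * b j) by ring.
rewrite exp_plus; ring.
Qed.

Lemma modsq_expact_log d (b : 'I_d -> R) (z : Cpt d) j : z j <> (0, 0) ->
  modsq (expact (@zeroR d) b z j) = exp (- (4 * PI * (b j - ln (modsq (z j)) / (4 * PI)))).
Proof.
move=> Hz; have Hpos := modsq_pos Hz; have HPI := PI_RGT_0.
rewrite modsq_expact_imag -[modsq (z j) in LHS](exp_ln _ Hpos) -exp_plus.
congr exp; field; lra.
Qed.

Lemma exp_le1 x : x <= 0 -> exp x <= 1.
Proof.
case/Rle_lt_or_eq_dec => [Hx|->]; last by rewrite exp_0; lra.
by rewrite -exp_0; left; exact: exp_increasing.
Qed.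

Definition decide (P : Prop) : bool := if excluded_middle_informative P then true else false.

Lemma decideP P : decide P = true <-> P.
Proof. by rewrite /decide; case: excluded_middle_informative. Qed.

Definition indicator (P : Prop) : R := if excluded_middle_informative P then 1 else 0.

Lemma indicator_cases P : (P /\ indicator P = 1) \/ (~ P /\ indicator P = 0).
Proof. by rewrite /indicator; case: excluded_middle_informative; tauto. Qed.

Section Quotient.
Variables (n d : nat) (X : 'I_d -> 'I_n -> R) (lam : 'I_d -> R).

(* Every nonempty face_eq Z is a face of Delta, supported by the sum of the
   normals X_j, j in Z. *)
Lemma face_eq_is_face (Z : 'I_d -> Prop) (mu0 : 'I_n -> R) :
  face_eq X lam Z mu0 -> is_face X lam (face_eq X lam Z).
Proof.
move=> H0; split; first by exists mu0.
exists (fun i => rsum (fun j => indicator (Z j) * X j i)),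
       (rsum (fun j => indicator (Z j) * lam j)).
pose slack mu j := indicator (Z j) * (dot mu (X j) - lam j).
have Hslack mu : dot mu (fun i => rsum (fun j => indicator (Z j) * X j i)) -
                 rsum (fun j => indicator (Z j) * lam j) = rsum (slack mu).
  rewrite dot_comb (rsum_ext (f := fun j => indicator (Z j) * dot mu (X j))
    (g := fun j => slack mu j + indicator (Z j) * lam j)) ?rsum_add => [|j]; first ring.
  by rewrite /slack; ring.
have Hpos mu : Defs.Delta X lam mu -> forall j, 0 <= slack mu j.
  move=> Hmu j; rewrite /slack; case: (indicator_cases (Z j)) => [[_ ->]|[_ ->]]; last lra.
  by have := Hmu j; lra.
split=> [mu Hmu|mu]; first by have := Hslack mu; have := rsum_ge0 (Hpos mu Hmu); lra.
split=> [[Hmu HZ]|[Hmu Heq]]; split=> //.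
- have : rsum (slack mu) = 0.
    apply: rsum_eq0 => j; rewrite /slack.
    by case: (indicator_cases (Z j)) => [[Hj ->]|[_ ->]]; [rewrite HZ //|]; ring.
  by have := Hslack mu; lra.
- move=> j Hj; have Hs : rsum (slack mu) = 0 by have := Hslack mu; lra.
  have := rsum_term_le j (Hpos mu Hmu); rewrite Hs /slack.
  by case: (indicator_cases (Z j)) => [[_ ->]|[]] //; have := Hmu j; lra.
Qed.

Definition admissible (S : {set 'I_d}) : Prop :=
  exists F, is_face X lam F /\ forall j, j \in S -> IF X lam F j.

Definition normal_region (S : {set 'I_d}) (w : Cpt d) : Prop :=
  (forall j, modsq (w j) <= 1) /\ (forall j, j \notin S -> 1 <= modsq (w j)).

Lemma normal_region_CdDelta S w : admissible S -> normal_region S w -> CdDelta X lam w.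
Proof.
move=> [F [HF HS]] [_ Hw]; exists F; split=> // j Hj Hz.
have Hn : j \notin S by apply/negP => /HS.
by have := Hw j Hn; rewrite Hz /modsq /=; lra.
Qed.

Definition coords (w : Cpt d) : ('I_d * bool) -> R :=
  fun t => if t.2 then fst (w t.1) else snd (w t.1).
Definition of_coords (f : ('I_d * bool) -> R) : Cpt d := fun j => (f (j, true), f (j, false)).

Lemma of_coordsK w : of_coords (coords w) = w.
Proof. by apply: functional_extensionality => j; rewrite /of_coords /coords /=; case: (w j). Qed.

(* Each admissible normal region is compact in C^d_Delta, so finitely many members
   of an open cover of C^d_Delta cover it. *)
Lemma normal_region_cover (I : Type) (U : I -> Cpt d -> Prop) S :
  (forall i, openD X lam (U i)) -> (forall z, CdDelta X lam z -> exists i, U i z) ->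
  admissible S -> exists L : list I, forall w, normal_region S w -> exists i, In i L /\ U i w.
Proof.
move=> Hop Hcov HS.
have Hbd f : normal_region S (of_coords f) -> forall t, Rabs (f t) <= 1.
  move=> [H _] [j []]; have := H j; rewrite /modsq /of_coords /= => H'; first exact: coord_bound H'.
  by apply: (@coord_bound _ (f (j, true))); lra.
have Hcl f : (forall e, e > 0 -> exists g, normal_region S (of_coords g) /\ sup_close e f g) ->
    normal_region S (of_coords f).
  move=> Hf; split=> [j|j Hj].
  - apply: modsq_limit_le => e He; have [g [[Hg _] Hn]] := Hf e He.
    by exists (of_coords g j); split; [exact: Hn | exact: Hn | exact: Hg].
  - apply: modsq_limit_ge => e He; have [g [[_ Hg] Hn]] := Hf e He.
    by exists (of_coords g j); split; [exact: Hn | exact: Hn | exact: Hg].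
have Hnbhd f : normal_region S (of_coords f) -> exists i e, e > 0 /\
    forall g, normal_region S (of_coords g) -> sup_close e f g -> U i (of_coords g).
  move=> Kf; have Cf := normal_region_CdDelta HS Kf; have [i Hi] := Hcov _ Cf.
  have [e [He He']] := Hop i _ Cf Hi; exists i, e; split=> // g Kg Hn.
  by apply: He' (normal_region_CdDelta HS Kg) _ => j; split; exact: Hn.
have [L HL] := heine_borel (@In_enum _) (U := fun i f => U i (of_coords f)) Hbd Hcl Hnbhd.
by exists L => w; rewrite -(of_coordsK w) => /HL.
Qed.

Lemma normal_regions_cover (I : Type) (U : I -> Cpt d -> Prop) :
  (forall i, openD X lam (U i)) -> (forall z, CdDelta X lam z -> exists i, U i z) ->
  exists L : list I, forall S w, admissible S -> normal_region S w -> exists i, In i L /\ U i w.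
Proof.
move=> Hop Hcov.
suff [L HL] : exists L : list I, forall S, In S (enum {set 'I_d}) -> admissible S ->
    forall w, normal_region S w -> exists i, In i L /\ U i w.
  by exists L => S w HS; apply: HL => //; exact: In_enum.
elim: (enum {set 'I_d}) => [|S ss [L1 H1]]; first by exists nil.
case: (classic (admissible S)) => HS; last first.
  by exists L1 => S' [<-|HS'] //; exact: H1.
have [L2 H2] := normal_region_cover Hop Hcov HS.
exists (L2 ++ L1) => S' [<- _|HS' HS''] w Kw.
- by have [i [Hi Ui]] := H2 w Kw; exists i; rewrite in_app_iff; tauto.
- by have [i [Hi Ui]] := H1 S' HS' HS'' w Kw; exists i; rewrite in_app_iff; tauto.
Qed.

(* With Z the zero coordinates of z, choose
   v_j = ln |z_j|^2 / (4 pi) and let mu minimize <mu, -pi(v)> on the face face_eq Z;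
   the optimality multipliers y, y' correct v to b = v + y - y' in ker pi, and
   |exp(i b) z|_j^2 = e^(-4 pi y_j) is <= 1, with equality off the active set of mu. *)
Theorem orbit_normal_form (M : R) (z : Cpt d) :
  (forall mu, Defs.Delta X lam mu -> forall i, Rabs (mu i) <= M) ->
  CdDelta X lam z ->
  exists S b, [/\ admissible S, normal_region S (expact (@zeroR d) b z) &
               forall i, piR X b i = 0].
Proof.
move=> Hbd [F0 [[[mu0 Hmu0] [v0 [c0 [_ HF0]]]] Hnz]].
pose Z j := z j = (0, 0).
have Hne : exists mu0, face_eq X lam Z mu0.
  exists mu0; split; first exact: (proj1 (proj1 (HF0 mu0) Hmu0)).
  move=> j Hj; have HI : IF X lam F0 j by apply: NNPP => H; exact: Hnz j H Hj.
  exact: HI mu0 Hmu0.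
pose v j := if excluded_middle_informative (Z j) then 0 else ln (modsq (z j)) / (4 * PI).
pose tau i := - rsum (fun j => v j * X j i).
have [mu [Pmu [y [y' [Hy Hs Hs' Htau]]]]] := lp_optimality tau Hbd Hne.
pose J j := dot mu (X j) = lam j.
pose b j := v j + y j - y' j.
have Hmod j : ~ Z j -> modsq (expact (@zeroR d) b z j) = exp (- (4 * PI * y j)).
  move=> Hj; rewrite modsq_expact_log //; congr exp.
  by rewrite /b /v Hs' //; case: excluded_middle_informative => // HZ /=; ring.
have HZJ j : Z j -> J j := proj2 Pmu j.
exists [set j | decide (J j)], b; split.
- exists (face_eq X lam J); split.
    exact: (face_eq_is_face (conj (proj1 Pmu) (fun j (Hj : J j) => Hj))).
  by move=> j; rewrite inE => /decideP Hj mu' [_ H]; exact: H j Hj.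
- split=> [j|j].
  + case: (classic (Z j)) => Hj.
      by rewrite modsq_expact_imag Hj /modsq /= !Rmult_0_r Rplus_0_r Rmult_0_r; lra.
    by rewrite Hmod //; apply: exp_le1; have := proj1 (Hy j); have := PI_RGT_0; nra.
  + rewrite inE => /negP Hj; have HnJ : ~ J j by move=> H; apply: Hj; apply/decideP.
    have HnZ : ~ Z j by move=> H; exact: HnJ (HZJ j H).
    by rewrite Hmod // Hs // Rmult_0_r Ropp_0 exp_0; lra.
- move=> i; rewrite /piR (rsum_ext (f := fun j => b j * X j i)
    (g := fun j => v j * X j i + (y j - y' j) * X j i)) ?rsum_add -?Htau /tau => [|j];
    rewrite ?/b; ring.
Qed.

Lemma near_refl (e : R) (w : Cpt d) : e > 0 -> near e w w.
Proof. by move=> He j; rewrite !Rminus_diag Rabs_R0; lra. Qed.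

Lemma orbitA_refl (w : Cpt d) : orbitA X w w.
Proof.
exists (@zeroR d); split=> [i|j]; last by rewrite expact_zero.
by rewrite /piR rsum_eq0 // => j; rewrite /zeroR; ring.
Qed.

(* Moving along an A-orbit stays in one ~-class (take a = 0, p = w). *)
Lemma orbit_simrel m (Y : 'I_m -> 'I_n -> R) (z w : Cpt d) :
  CdDelta X lam w -> orbitA X z w -> simrel X lam Y z w.
Proof.
move=> Cw Oz; exists (@zeroR d); split.
  by exists (fun _ => 0%Z) => i; rewrite /piR !rsum_eq0 // => [l|j]; rewrite /zeroR; ring.
exists w; rewrite expact_zero; split; split=> // e He; exists w; split; try exact: near_refl.
- exact: Oz.
- exact: orbitA_refl.
Qed.

End Quotient.

Theorem mainTheorem15 (n d : nat) (X : 'I_d -> 'I_n -> R) (lam : 'I_d -> R)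
  (m : nat) (Y : 'I_m -> 'I_n -> R) :
  polytope_data X lam ->
  quasilattice_data X Y ->
  XDelta_compact X lam Y.
Proof.
move=> [[M Hbd] _] _ I U Hsat Hcov.
(* A finite subfamily covers all admissible normal regions; each ~-class meets one. *)
have [L HL] := normal_regions_cover (fun i => proj1 (Hsat i)) Hcov.
exists L => z Cz.
have [S [b [HS Hw Hb]]] := orbit_normal_form Hbd Cz.
have [i [Hi Ui]] := HL S _ HS Hw.
exists i; split=> //.
have Cw := normal_region_CdDelta HS Hw.
apply: (proj2 (Hsat i) _ z Cw Cz _ Ui).
by apply: rst_sym; apply: rst_step; apply: orbit_simrel => //; exists b.
Qed.
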